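(* Let $\omega_0>0$, $\lambda\in\mathbb R$, $\omega\ge0$ measurable, $g\in\mathfrak h$, and let $G=G^*$ be a $2\times2$ matrix with zero diagonal entries in the $\sigma_z$-eigenbasis. Let $\mu$ be a Borel probability measure on $\mathfrak h$ that is even, i.e. $\mu(-A)=\mu(A)$ for all Borel $A\subset\mathfrak h$. For $f\in\mathfrak h$ let $U_t(f)$ solve $i\partial_tU_t(f)=[\tfrac12\omega_0\sigma_z+\sqrt2\lambda\,\mathrm{Re}\langle e^{-it\omega}f,g\rangle\,G]U_t(f)$, $U_0(f)=1$, and for a $2\times2$ matrix $X$ set $\Phi_t(X)=\int_{\mathfrak h}d\mu(f)\,U_t(f)XU_t(f)^*$. Then for all $t$: if $X$ is diagonal, $\Phi_t(X)$ is diagonal; if $X$ has zero diagonal entries, so does $\Phi_t(X)$. Consequently the diagonal and off-diagonal parts of the spin density matrix $\gamma(t)=\Phi_t(\gamma_0)$ evolve independently.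
   Context: $\mathfrak h=L^2(\mathbb R^3,d^3k)$ with inner product $\langle f,g\rangle=\int\overline fg$; $e^{-it\omega}$ acts by multiplication; ''diagonal'' refers to the eigenbasis $\sigma_z|1\rangle=|1\rangle$, $\sigma_z|2\rangle=-|2\rangle$. *)

From HB Require Import structures.
From mathcomp Require Import all_boot all_order all_algebra.
From mathcomp Require Import all_classical all_reals all_analysis.
From mathcomp Require Import complex.
Set Implicit Arguments. Unset Strict Implicit. Unset Printing Implicit Defensive.
Import Order.TTheory GRing.Theory Num.Theory.
Import numFieldNormedType.Exports.
Local Open Scope classical_set_scope.
Local Open Scope ring_scope.
Local Open Scope complex_scope.

Section Defs.
Variable R : realType.
Local Notation C := R[i].

(** The real line with its Borel sigma-algebra (the domain of lebesgue_measure). *)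
Definition Rm : measurableType _ := g_sigma_algebraType (R.-ocitv.-measurable).
Definition k3 : measurableType _ := ((Rm * Rm) * Rm)%type.
Definition leb3 := ((@lebesgue_measure R \x @lebesgue_measure R) \x @lebesgue_measure R)%E.

Definition csq (z : C) : R := (complex.Re z) ^+ 2 + (complex.Im z) ^+ 2.

Definition cint d (T : measurableType d) (mu : {measure set T -> \bar R}) (D : set T)
  (F : T -> C) : C :=
  ((Rintegral mu D (fun x => complex.Re (F x))) +i* (Rintegral mu D (fun x => complex.Im (F x))))%C.

Definition L2 (f : k3 -> C) : Prop :=
  [/\ measurable_fun setT (fun k => complex.Re (f k)),
      measurable_fun setT (fun k => complex.Im (f k)) &
      (\int[leb3]_k (csq (f k))%:E < +oo)%E].

(** the one-particle space h = L^2(R^3, d^3k) (represented by functions; the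
    topology below is the L^2 (semi)norm topology) *)
Definition hspace := {f : k3 -> C | L2 f}.
Definition hfun (f : hspace) : k3 -> C := proj1_sig f.
Coercion hfun : hspace >-> Funclass.

Lemma L2_0 : L2 (fun _ => 0).
Proof.
split; first exact: measurable_cst.
  exact: measurable_cst.
under eq_integral do rewrite /csq /= expr2 mulr0 addr0.
by rewrite integral0 ltry.
Qed.

HB.instance Definition _ := gen_eqMixin hspace.
HB.instance Definition _ := gen_choiceMixin hspace.
HB.instance Definition _ := isPointed.Build hspace (exist _ _ L2_0).

Lemma L2N (f : k3 -> C) : L2 f -> L2 (fun k => - f k).
Proof.
case=> mre mim fin; split.
- have -> : (fun k => complex.Re (- f k)) = (fun k => - complex.Re (f k)).
    by apply: funext => k; case: (f k).
  exact: measurableT_comp.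
- have -> : (fun k => complex.Im (- f k)) = (fun k => - complex.Im (f k)).
    by apply: funext => k; case: (f k).
  exact: measurableT_comp.
- have -> : (fun k => (csq (- f k))%:E) = (fun k => (csq (f k))%:E) :> (k3 -> \bar R).
    by apply: funext => k; case: (f k) => a b; rewrite /csq /= !sqrrN.
  exact: fin.
Qed.

Definition hneg (f : hspace) : hspace := exist _ _ (L2N (proj2_sig f)).

Definition inner (u v : k3 -> C) : C := cint leb3 setT (fun k => (u k)^* * v k).

Definition hopen (A : set hspace) : Prop :=
  forall f, A f -> exists2 e : R, 0 < e &
    forall h : hspace, (\int[leb3]_k (csq (f k - h k))%:E < e%:E)%E -> A h.

Definition hBorel : measurableType _ := g_sigma_algebraType hopen.

Definition expi (x : R) : C := (cos x +i* sin x)%C.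

(** sigma_z in the basis |1> = index 0, |2> = index 1 *)
Definition sigmaz : 'M[C]_2 := \matrix_(i, j) (if i == j then (if i == 0 then 1 else -1) else 0).

Definition adj (A : 'M[C]_2) : 'M[C]_2 := \matrix_(i, j) (A j i)^*.

Definition is_diag2 (X : 'M[C]_2) : Prop := X 0 1 = 0 /\ X 1 0 = 0.
Definition is_offdiag2 (X : 'M[C]_2) : Prop := X 0 0 = 0 /\ X 1 1 = 0.

Definition Ham (w0 lam : R) (w : k3 -> R) (g : hspace) (G : 'M[C]_2)
    (f : hspace) (t : R) : 'M[C]_2 :=
  (w0 / 2)%:C *: sigmaz
  + (Num.sqrt 2 * lam * complex.Re (inner (fun k => expi (- (t * w k)) * f k) g))%:C *: G.

Definition Phi (mu : probability hBorel R) (U : hspace -> R -> 'M[C]_2)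
    (t : R) (X : 'M[C]_2) : 'M[C]_2 :=
  \matrix_(i, j) cint mu setT (fun f : hBorel => (U f t *m X *m adj (U f t)) i j).

Definition solves_ODE (w0 lam : R) (w : k3 -> R) (g : hspace) (G : 'M[C]_2)
    (U : hspace -> R -> 'M[C]_2) : Prop :=
  forall f : hspace, U f 0 = 1%:M /\
    forall t : R, exists2 D : 'M[C]_2,
      (forall i j : 'I_2,
         is_derive t 1 (fun s => complex.Re (U f s i j)) (complex.Re (D i j)) /\
         is_derive t 1 (fun s => complex.Im (U f s i j)) (complex.Im (D i j)))
      & 'i *: D = Ham w0 lam w g G f t *m U f t.

End Defs.

From HB Require Import structures.
From mathcomp Require Import all_boot all_order all_algebra.
From mathcomp Require Import all_classical all_reals all_analysis.
From mathcomp Require Import complex.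
From mathcomp Require Import lra ring.
Import Order.TTheory GRing.Theory Num.Theory.
Set Implicit Arguments. Unset Strict Implicit. Unset Printing Implicit Defensive.
Local Open Scope classical_set_scope.
Local Open Scope ring_scope.

(* Negating the field, f |-> -f, flips the sign of Re <e^{-itw} f, g>; since G is
   off-diagonal, sigma_z G sigma_z = -G, hence H_t(-f) = sigma_z H_t(f) sigma_z.
   Solutions of i U' = H U with self-adjoint H are unique (W^* V is constant),
   so U_t(-f) = sigma_z U_t(f) sigma_z.  When sigma_z X sigma_z = X (resp. -X)
   the off-diagonal (resp. diagonal) entries of U_t(f) X U_t(f)^* are therefore
   odd functions of f, and their integrals against the even measure mu vanish. *)

Lemma RintegralN d (T : measurableType d) (R : realType)
    (mu : {measure set T -> \bar R}) (D : set T) (f : T -> R) :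
  Rintegral mu D (fun x => - f x) = - Rintegral mu D f.
Proof.
rewrite /Rintegral; under eq_integral do rewrite EFinN.
rewrite integralE [in RHS]integralE funeposN funenegN.
pose F x := (f x)%:E.
have := @integral_ge0 _ _ _ mu D _ (fun x (_ : D x) => funepos_ge0 F x).
have := @integral_ge0 _ _ _ mu D _ (fun x (_ : D x) => funeneg_ge0 F x).
(* [fine] of an undefined difference [+oo - +oo] is [0] on both sides. *)
by case: (\int[mu]_(x in D) _)%E => [a||]; case: (\int[mu]_(x in D) _)%E => [b||]
  //= _ _; rewrite ?oppr0 ?opprB.
Qed.

Section InvolutionInvariantIntegral.
Context d (T : measurableType d) (R : realType) (mu : {measure set T -> \bar R}).
Variable phi : T -> T.
Hypotheses (mphi : measurable_fun setT phi) (phiK : involutive phi)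
  (mu_phi : forall A, measurable A -> mu (phi @^-1` A) = mu A).
Import HBNNSimple.

Lemma nnsfun_comp (h : {nnsfun T >-> R}) :
  exists2 k : {nnsfun T >-> R}, k =1 h \o phi & sintegral mu k = sintegral mu h.
Proof.
have mk : measurable_fun setT (h \o phi) by apply: measurableT_comp.
have fk : finite_set (range (h \o phi)).
  by apply: sub_finite_set (@fimfunP _ _ h) => _ [x _ <-]; exists (phi x).
pose k : {nnsfun T >-> R} := HB.pack (h \o phi)
  (isMeasurableFun.Build _ _ _ _ _ mk) (FiniteImage.Build _ _ _ fk)
  (isNonNegFun.Build _ _ _ (fun x => @fun_ge0 _ _ h (phi x))).
exists k => //; rewrite /sintegral; apply: eq_fsbigr => x _.
by rewrite comp_preimage mu_phi.
Qed.

Lemma sintegrals_comp_sub (f g : T -> \bar R) : f =1 g \o phi ->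
  [set sintegral mu h | h in [set h : {nnsfun T >-> R} | forall x, ((h x)%:E <= f x)%E]]
  `<=` [set sintegral mu h | h in [set h : {nnsfun T >-> R} | forall x, ((h x)%:E <= g x)%E]].
Proof.
move=> fg _ [h hf <-]; have [k kE <-] := nnsfun_comp h.
by exists k => // x; rewrite kE /=; have := hf (phi x); rewrite fg /= phiK.
Qed.

Lemma ge0_integral_comp (f : T -> \bar R) : (forall x, (0 <= f x)%E) ->
  (\int[mu]_x f (phi x) = \int[mu]_x f x)%E.
Proof.
move=> f0; rewrite !ge0_integralTE //; congr ereal_sup.
apply/seteqP; split; first exact: sintegrals_comp_sub.
by apply: sintegrals_comp_sub => x /=; rewrite phiK.
Qed.

Lemma integral_comp (f : T -> \bar R) :
  (\int[mu]_x f (phi x) = \int[mu]_x f x)%E.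
Proof.
rewrite integralE [in RHS]integralE.
rewrite -(@ge0_integral_comp _ (funepos_ge0 f)) -(@ge0_integral_comp _ (funeneg_ge0 f)).
by congr (_ - _)%E; apply: eq_integral => x _; rewrite !(funeposE, funenegE).
Qed.

Lemma Rintegral_odd (f : T -> R) : (forall x, f (phi x) = - f x) ->
  Rintegral mu setT f = 0.
Proof.
move=> fN; suff : Rintegral mu setT f = - Rintegral mu setT f by lra.
rewrite -RintegralN /Rintegral -(integral_comp (fun x => (f x)%:E)).
by congr fine; apply: eq_integral => x _; rewrite fN.
Qed.

Lemma cint_odd (F : T -> R[i]) : (forall x, F (phi x) = - F x) ->
  cint mu setT F = 0.
Proof.
move=> FN; rewrite /cint !Rintegral_odd // => x; rewrite FN; by case: (F x).
Qed.

End InvolutionInvariantIntegral.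

Section ComplexDerivative.
Variable R : realType.
Local Notation C := R[i].

Definition is_cderive (t : R) (F : R -> C) (d : C) :=
  is_derive t 1 (fun s => complex.Re (F s)) (complex.Re d) /\
  is_derive t 1 (fun s => complex.Im (F s)) (complex.Im d).

Lemma is_cderive_cst t (c : C) : is_cderive t (fun _ => c) 0.
Proof. by split; exact: is_derive_cst. Qed.

Lemma is_cderiveD t F G a b : is_cderive t F a -> is_cderive t G b ->
  is_cderive t (fun s => F s + G s) (a + b).
Proof.
move=> [Fr Fi] [Gr Gi]; split.
- have -> : (fun s => complex.Re (F s + G s)) =
      (fun s => complex.Re (F s) + complex.Re (G s)).
    by apply: funext => s; case: (F s) (G s) => ? ? [].
  have -> : complex.Re (a + b) = complex.Re a + complex.Re b by case: (a) (b) => ? ? [].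
  exact: is_deriveD.
- have -> : (fun s => complex.Im (F s + G s)) =
      (fun s => complex.Im (F s) + complex.Im (G s)).
    by apply: funext => s; case: (F s) (G s) => ? ? [].
  have -> : complex.Im (a + b) = complex.Im a + complex.Im b by case: (a) (b) => ? ? [].
  exact: is_deriveD.
Qed.

Lemma is_cderiveM t F G a b : is_cderive t F a -> is_cderive t G b ->
  is_cderive t (fun s => F s * G s) (a * G t + F t * b).
Proof.
move=> [Fr Fi] [Gr Gi]; split.
- have -> : (fun s => complex.Re (F s * G s)) = (fun s =>
      complex.Re (F s) * complex.Re (G s) - complex.Im (F s) * complex.Im (G s)).
    by apply: funext => s; case: (F s) (G s) => ? ? [].
  have -> : complex.Re (a * G t + F t * b) =
      (complex.Re (F t) * complex.Re b + complex.Re (G t) * complex.Re a) -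
      (complex.Im (F t) * complex.Im b + complex.Im (G t) * complex.Im a).
    by case: (a) (b) (F t) (G t) => ? ? [? ?] [? ?] [? ?] /=; ring.
  exact: is_deriveB (is_deriveM Fr Gr) (is_deriveM Fi Gi).
- have -> : (fun s => complex.Im (F s * G s)) = (fun s =>
      complex.Re (F s) * complex.Im (G s) + complex.Im (F s) * complex.Re (G s)).
    by apply: funext => s; case: (F s) (G s) => ? ? [].
  have -> : complex.Im (a * G t + F t * b) =
      (complex.Re (F t) * complex.Im b + complex.Im (G t) * complex.Re a) +
      (complex.Im (F t) * complex.Re b + complex.Re (G t) * complex.Im a).
    by case: (a) (b) (F t) (G t) => ? ? [? ?] [? ?] [? ?] /=; ring.
  exact: is_deriveD (is_deriveM Fr Gi) (is_deriveM Fi Gr).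
Qed.

Lemma is_cderive_conj t F a : is_cderive t F a ->
  is_cderive t (fun s => conjc (F s)) (conjc a).
Proof.
move=> [Fr Fi]; split.
- have -> : (fun s => complex.Re (conjc (F s))) = (fun s => complex.Re (F s)).
    by apply: funext => s; case: (F s).
  by have -> : complex.Re (conjc a) = complex.Re a by case: (a).
- have -> : (fun s => complex.Im (conjc (F s))) = (fun s => - complex.Im (F s)).
    by apply: funext => s; case: (F s).
  have -> : complex.Im (conjc a) = - complex.Im a by case: (a).
  exact: is_deriveN.
Qed.

Lemma is_cderive0_cst F : (forall t, is_cderive t F 0) -> forall s t, F s = F t.
Proof.
move=> F'0 s t.
have ReE := is_derive_0_is_cst s t (fun r => (F'0 r).1).
have ImE := is_derive_0_is_cst s t (fun r => (F'0 r).2).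
by move: ReE ImE; case: (F s) (F t) => ? ? [? ?] /= -> ->.
Qed.

End ComplexDerivative.

Lemma mulmx2E (R : pzSemiRingType) (A B : 'M[R]_2) i j :
  (A *m B) i j = A i 0 * B 0 j + A i 1 * B 1 j.
Proof.
rewrite mxE !big_ord_recl big_ord0 addr0.
by congr (A i _ * B _ j + A i _ * B _ j); apply: val_inj.
Qed.

Lemma matrix2P (T : Type) (A B : 'M[T]_2) :
  A 0 0 = B 0 0 -> A 0 1 = B 0 1 -> A 1 0 = B 1 0 -> A 1 1 = B 1 1 -> A = B.
Proof.
have ord2 (k : 'I_2) : k = 0 \/ k = 1.
  by case: k => [[|[|//]]] ?; [left | right]; apply: val_inj.
move=> E00 E01 E10 E11; apply/matrixP => i j.
by case: (ord2 i) (ord2 j) => -> [] ->.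
Qed.

Section Adjoint.
Variable R : realType.
Local Notation C := R[i].

Lemma adjM (A B : 'M[C]_2) : adj (A *m B) = adj B *m adj A.
Proof.
apply/matrixP => i j; rewrite mxE !mulmx2E !mxE rmorphD !rmorphM.
by rewrite [_^* * _^*]mulrC [X in _ + X]mulrC.
Qed.

Lemma adjD (A B : 'M[C]_2) : adj (A + B) = adj A + adj B.
Proof. by apply/matrixP => i j; rewrite !mxE rmorphD. Qed.

Lemma adjZ (a : C) (A : 'M[C]_2) : adj (a *: A) = conjc a *: adj A.
Proof. by apply/matrixP => i j; rewrite !mxE rmorphM. Qed.

Lemma adj1 : adj 1%:M = 1%:M :> 'M[C]_2.
Proof. by apply/matrixP => i j; rewrite !mxE eq_sym rmorph_nat. Qed.

End Adjoint.

Section MatrixDerivative.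
Variable R : realType.
Local Notation C := R[i].

Definition is_mderive (t : R) (F : R -> 'M[C]_2) (D : 'M[C]_2) :=
  forall i j, is_cderive t (fun s => F s i j) (D i j).

Lemma is_mderive_cst t (A : 'M[C]_2) : is_mderive t (fun _ => A) 0.
Proof. by move=> i j; rewrite mxE; exact: is_cderive_cst. Qed.

Lemma is_mderiveM t F G DF DG : is_mderive t F DF -> is_mderive t G DG ->
  is_mderive t (fun s => F s *m G s) (DF *m G t + F t *m DG).
Proof.
move=> F' G' i j; under [fun s => _]funext do rewrite mulmx2E.
have -> : (DF *m G t + F t *m DG) i j =
    (DF i 0 * G t 0 j + F t i 0 * DG 0 j) + (DF i 1 * G t 1 j + F t i 1 * DG 1 j).
  by rewrite mxE !mulmx2E addrACA.
exact: is_cderiveD (is_cderiveM (F' i 0) (G' 0 j)) (is_cderiveM (F' i 1) (G' 1 j)).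
Qed.

Lemma is_mderive_adj t F D : is_mderive t F D ->
  is_mderive t (fun s => adj (F s)) (adj D).
Proof.
move=> F' i j; rewrite mxE; under [fun s => _]funext do rewrite mxE.
exact: is_cderive_conj.
Qed.

Lemma is_mderive0_cst F : (forall t, is_mderive t F 0) -> forall s t, F s = F t.
Proof.
move=> F'0 s t; apply/matrixP => i j.
by apply: (is_cderive0_cst (F := fun r => F r i j)) => r; have := F'0 r i j; rewrite mxE.
Qed.

End MatrixDerivative.

Section SchrodingerEquation.
Variable R : realType.
Local Notation C := R[i].
Variable H : R -> 'M[C]_2.
Hypothesis adjH : forall t, adj (H t) = H t.

Definition schrodinger_sol (V : R -> 'M[C]_2) :=
  forall t, exists2 D, is_mderive t V D & 'i *: D = H t *m V t.

(* [d/dt (W^* V) = (-i H W)^* V + W^* (-i H V) = i W^* H V - i W^* H V = 0]. *)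
Lemma schrodinger_adj_mul_cst V W : schrodinger_sol V -> schrodinger_sol W ->
  forall s t, adj (W s) *m V s = adj (W t) *m V t.
Proof.
move=> solV solW; apply: is_mderive0_cst => t.
have [DV V' eV] := solV t; have [DW W' eW] := solW t.
have Di (D A : 'M[C]_2) : 'i *: D = A -> D = - 'i *: A.
  by move=> <-; rewrite scalerA mulNr -expr2 sqrCi opprK scale1r.
have conjNi : conjc (- 'i) = 'i :> C.
  by apply/eqP; rewrite eq_complex /= !oppr0 opprK !eqxx.
have := is_mderiveM (is_mderive_adj W') V'.
rewrite (Di _ _ eV) (Di _ _ eW) adjZ adjM adjH conjNi.
by rewrite -scalemxAl -scalemxAr mulmxA scaleNr subrr.
Qed.

Lemma schrodinger_sol_unique V W : schrodinger_sol V -> schrodinger_sol W ->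
  V 0 = 1%:M -> W 0 = 1%:M -> V =1 W.
Proof.
move=> solV solW V0 W0 t.
have WV : adj (W t) *m V t = 1%:M.
  by rewrite (schrodinger_adj_mul_cst solV solW t 0) V0 W0 adj1 mul1mx.
have WW : W t *m adj (W t) = 1%:M.
  by apply: mulmx1C; rewrite (schrodinger_adj_mul_cst solW solW t 0) W0 adj1 mul1mx.
by rewrite -[V t]mul1mx -WW -mulmxA WV mulmx1.
Qed.

End SchrodingerEquation.

Lemma preimage_involutive (T : Type) (f : T -> T) (A : set T) :
  involutive f -> f @^-1` A = f @` A.
Proof.
move=> fK; apply/seteqP; split => [x Afx | _ [x Ax <-]]; last by rewrite /= fK.
by exists (f x); rewrite ?fK.
Qed.

Section Hneg.
Variable R : realType.

Lemma hnegK : involutive (@hneg R).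
Proof. by case=> f f2; apply: eq_exist; apply: funext => k /=; rewrite opprK. Qed.

Lemma measurable_hneg : measurable_fun setT (@hneg R : hBorel R -> hBorel R).
Proof.
apply: (@measurability _ _ (hBorel R) (hBorel R) setT _ (@hopen R)) => //.
move=> _ [B B_open <-]; rewrite setTI; apply: sub_sigma_algebra => f /= Bf.
have [e e0 Be] := B_open _ Bf; exists e => // h fh; apply: Be.
suff -> : (fun k => (csq ((hneg f) k - (hneg h) k))%:E) =
          (fun k => (csq (f k - h k))%:E) :> (k3 R -> \bar R) by [].
by apply: funext => k /=; rewrite -opprD; case: (_ + _) => ? ?; rewrite /csq /= !sqrrN.
Qed.

End Hneg.

Section SigmaZ.
Variable R : realType.
Local Notation C := R[i].
Local Notation sz := (@sigmaz R).

Lemma sigmaz_conjE (A : 'M[C]_2) :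
  sz *m A *m sz = \matrix_(i, j) (if i == j then A i j else - A i j).
Proof. by apply: matrix2P; rewrite !mulmx2E !mxE /=; ring. Qed.

Lemma sigmaz_conj_diag (A : 'M[C]_2) : is_diag2 A -> sz *m A *m sz = A.
Proof.
by case=> A01 A10; apply: matrix2P; rewrite sigmaz_conjE !mxE //= ?A01 ?A10 ?oppr0.
Qed.

Lemma sigmaz_conj_offdiag (A : 'M[C]_2) : is_offdiag2 A -> sz *m A *m sz = - A.
Proof.
by case=> A00 A11; apply: matrix2P; rewrite sigmaz_conjE !mxE //= ?A00 ?A11 ?oppr0.
Qed.

Lemma sigmaz_sqr : sz *m sz = 1%:M.
Proof. by apply: matrix2P; rewrite !mulmx2E !mxE /=; ring. Qed.

Lemma adj_sigmaz : adj sz = sz.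
Proof. by apply: matrix2P; rewrite !mxE /=; congr Complex; ring. Qed.

Lemma sigmaz_conj_mulmx (A Y : 'M[C]_2) :
  (sz *m A *m sz) *m Y *m adj (sz *m A *m sz) =
  sz *m (A *m (sz *m Y *m sz) *m adj A) *m sz.
Proof. by rewrite !adjM adj_sigmaz !mulmxA. Qed.

End SigmaZ.

Section Hamiltonian.
Variables (R : realType) (w0 lam : R) (w : k3 R -> R) (g : hspace R) (G : 'M[R[i]]_2).

Lemma adj_Ham f t : adj G = G -> adj (Ham w0 lam w g G f t) = Ham w0 lam w g G f t.
Proof. by move=> adjG; rewrite /Ham adjD !adjZ adjG adj_sigmaz !conjc_real. Qed.

Lemma Re_inner_hneg (e : k3 R -> R[i]) (f : hspace R) :
  complex.Re (inner (fun k => e k * hneg f k) g) =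
  - complex.Re (inner (fun k => e k * f k) g).
Proof.
rewrite /inner /cint /= -RintegralN; congr Rintegral; apply: funext => k /=.
rewrite /hfun /=; case: (e k) (sval f k) (sval g k) => ? ? [? ?] [? ?] /=; ring.
Qed.

Lemma Ham_hneg f t : is_offdiag2 G ->
  Ham w0 lam w g G (hneg f) t = sigmaz R *m Ham w0 lam w g G f t *m sigmaz R.
Proof.
move=> offG; rewrite /Ham Re_inner_hneg mulrN.
rewrite mulmxDr mulmxDl -!scalemxAr -!scalemxAl sigmaz_sqr mul1mx.
rewrite sigmaz_conj_offdiag // scalerN -scaleNr; congr (_ + _ *: _).
by apply/eqP; rewrite eq_complex /= oppr0 !eqxx.
Qed.

End Hamiltonian.

Lemma solution_hneg (R : realType) w0 lam w g (G : 'M[R[i]]_2) U f :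
  adj G = G -> is_offdiag2 G -> solves_ODE w0 lam w g G U ->
  U (hneg f) =1 fun s => sigmaz R *m U f s *m sigmaz R.
Proof.
move=> adjG offG solU.
apply: (schrodinger_sol_unique (H := Ham w0 lam w g G (hneg f))).
- by move=> t; exact: adj_Ham.
- by move=> t; have [D D' eD] := (solU (hneg f)).2 t; exists D.
- move=> t; have [D D' eD] := (solU f).2 t.
  exists (sigmaz R *m D *m sigmaz R).
    have sz' := is_mderive_cst t (sigmaz R).
    have := is_mderiveM (is_mderiveM sz' D') sz'.
    by rewrite !mul0mx mulmx0 add0r addr0.
  rewrite scalemxAl scalemxAr eD Ham_hneg //.
  by rewrite !mulmxA -[_ *m sigmaz R *m sigmaz R]mulmxA sigmaz_sqr mulmx1.
- exact: (solU (hneg f)).1.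
- by rewrite (solU f).1 mulmx1 sigmaz_sqr.
Qed.

Local Open Scope complex_scope.

Theorem mainTheorem13 (R : realType) (w0 lam : R) (w : k3 R -> R) (g : hspace R)
  (G : 'M[R[i]]_2) (mu : probability (hBorel R) R)
  (U : hspace R -> R -> 'M[R[i]]_2) :
  0 < w0 ->
  measurable_fun setT w ->
  (forall k, 0 <= w k) ->
  adj G = G ->
  is_offdiag2 G ->
  (forall A : set (hBorel R), measurable A -> mu (@hneg R @` A) = mu A) ->
  solves_ODE w0 lam w g G U ->
  forall (t : R) (X : 'M[R[i]]_2),
    (is_diag2 X -> is_diag2 (Phi mu U t X)) /\
    (is_offdiag2 X -> is_offdiag2 (Phi mu U t X)).
Proof.
move=> _ _ _ adjG offG mu_even solU t X.
have mu_hneg (A : set (hBorel R)) : measurable A -> mu (@hneg R @^-1` A) = mu A.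
  by move=> mA; rewrite preimage_involutive ?mu_even //; exact: hnegK.
have cint_hneg_odd (F : hBorel R -> R[i]) :
    (forall f, F (hneg f) = - F f) -> cint mu setT F = 0.
  exact: cint_odd (@measurable_hneg R) (@hnegK R) mu_hneg F.
have integrand_hneg f : U (hneg f) t *m X *m adj (U (hneg f) t) =
    sigmaz R *m (U f t *m (sigmaz R *m X *m sigmaz R) *m adj (U f t)) *m sigmaz R.
  by rewrite (solution_hneg f adjG offG solU) sigmaz_conj_mulmx.
split=> [X_diag | X_off]; split; rewrite mxE; apply: cint_hneg_odd => f;
  rewrite integrand_hneg.
1,2: by rewrite (sigmaz_conj_diag X_diag) sigmaz_conjE mxE.
all: by rewrite (sigmaz_conj_offdiag X_off) !(mulmxN, mulNmx) sigmaz_conjE !mxE.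
Qed.
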